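(* Fix positive definite diagonal matrices $\mathbf{G}_1,\dots,\mathbf{G}_g\in\mathbb{R}^{L\times L}$, a symmetric positive semidefinite matrix $\mathbf{S}\in\mathbb{R}^{gL\times gL}$ (playing the role of $\boldsymbol{\Sigma}+\boldsymbol{\mu}\boldsymbol{\mu}^T$), and a matrix $\mathbf{B}\in\mathbb{R}^{L\times L}$. For positive definite $\mathbf{B}_1,\dots,\mathbf{B}_g\in\mathbb{R}^{L\times L}$ let $\boldsymbol{\Sigma}_0=\operatorname{diag}\{\mathbf{G}_1\mathbf{B}_1\mathbf{G}_1,\dots,\mathbf{G}_g\mathbf{B}_g\mathbf{G}_g\}$ and $Q(\{\mathbf{B}_i\}_{i=1}^g,\{\mathbf{G}_i\}_{i=1}^g)=-\tfrac12\log\det\boldsymbol{\Sigma}_0-\tfrac12\operatorname{tr}(\boldsymbol{\Sigma}_0^{-1}\mathbf{S})$. Let $\zeta:\mathbb{R}^{L\times L}\to\mathbb{R}$ be a differentiable (explicit weak constraint) function and consider the problem $\min_{\{\mathbf{B}_i\}}Q(\{\mathbf{B}_i\},\{\mathbf{G}_i\})$ subject to $\zeta(\mathbf{B}_i)=\zeta(\mathbf{B})$ for all $i=1,\dots,g$. Suppose that, for given multipliers $\lambda_1^k,\dots,\lambda_g^k\in\mathbb{R}$, the point $\{\mathbf{B}_i^{k+1}\}_{i=1}^g$ is a stationary point of the Lagrange function, i.e. $\nabla_{\mathbf{B}_i}Q(\{\mathbf{B}_i^{k+1}\}_{i=1}^g,\{\mathbf{G}_i\}_{i=1}^g)-\lambda_i^k\nabla\zeta(\mathbf{B}_i^{k+1})=0$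 for all $i$. Then there exists a (hidden weak constraint) function $\psi:\mathbb{R}^{L\times L}\to\mathbb{R}$ such that $(\{\mathbf{B}_i^{k+1}\}_{i=1}^g,\{\lambda_i^k\}_{i=1}^g)$ is a KKT pair of the problem $\min_{\{\mathbf{B}_i\}}Q(\{\mathbf{B}_i\},\{\mathbf{G}_i\})$ subject to $\psi(\mathbf{B}_i)=\psi(\mathbf{B})$ for all $i=1,\dots,g$.
   Context: A KKT pair $(\{\mathbf{B}_i\},\{\lambda_i\})$ of the equality-constrained problem $\min Q$ s.t. $\psi(\mathbf{B}_i)=\psi(\mathbf{B})$, $i=1,\dots,g$, means: $\psi(\mathbf{B}_i)=\psi(\mathbf{B})$ for all $i$ (feasibility) and $\nabla_{\mathbf{B}_i}Q(\{\mathbf{B}_i\},\{\mathbf{G}_i\})-\lambda_i\nabla\psi(\mathbf{B}_i)=0$ for all $i$ (stationarity). Gradients are taken with respect to the matrix entries. *)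

From HB Require Import structures.
From mathcomp Require Import all_boot all_order all_algebra.
From mathcomp Require Import all_classical all_reals all_analysis.
Set Implicit Arguments. Unset Strict Implicit. Unset Printing Implicit Defensive.
Import Order.TTheory GRing.Theory Num.Theory.
Import numFieldNormedType.Exports.
Local Open Scope ring_scope.

Section Defs.
Variable R : realType.

Definition psd_mx (n : nat) (A : 'M[R]_n) : Prop :=
  A^T = A /\ forall v : 'rV[R]_n, 0 <= (v *m A *m v^T) 0 0.

Definition pd_mx (n : nat) (A : 'M[R]_n) : Prop :=
  A^T = A /\ forall v : 'rV[R]_n, v != 0 -> 0 < (v *m A *m v^T) 0 0.

Definition is_grad (m n : nat) (f : 'M[R]_(m, n) -> R) (X Gr : 'M[R]_(m, n)) : Prop :=
  differentiable f X /\
  forall V : 'M[R]_(m, n), 'd f X V = \sum_(a < m) \sum_(b < n) Gr a b * V a b.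

Definition Sigma0 (g L : nat) (Bs Gs : 'I_g -> 'M[R]_L) :
  'M[R]_(\sum_(i < g) L)%N :=
  \mxdiag_(i < g) (Gs i *m Bs i *m Gs i).

Definition Qfun (g L : nat) (S : 'M[R]_(\sum_(i < g) L)%N)
  (Bs Gs : 'I_g -> 'M[R]_L) : R :=
  - 2^-1 * ln (\det (Sigma0 Bs Gs)) - 2^-1 * \tr (invmx (Sigma0 Bs Gs) *m S).

Definition upd (g L : nat) (Bs : 'I_g -> 'M[R]_L) (i : 'I_g) (X : 'M[R]_L) :
  'I_g -> 'M[R]_L := fun j => if j == i then X else Bs j.

Definition block_stationary (g L : nat) (S : 'M[R]_(\sum_(i < g) L)%N)
  (Gs Bs : 'I_g -> 'M[R]_L) (c : 'M[R]_L -> R) (i : 'I_g) (lam : R) : Prop :=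
  exists GQ Gc : 'M[R]_L,
    [/\ is_grad (fun X => Qfun S (upd Bs i X) Gs) (Bs i) GQ,
        is_grad c (Bs i) Gc &
        GQ - lam *: Gc = 0].

Definition KKT_pair (g L : nat) (S : 'M[R]_(\sum_(i < g) L)%N)
  (Gs : 'I_g -> 'M[R]_L) (psi : 'M[R]_L -> R) (B : 'M[R]_L)
  (Bs : 'I_g -> 'M[R]_L) (lams : 'I_g -> R) : Prop :=
  (forall i, psi (Bs i) = psi B) /\
  (forall i, block_stationary S Gs Bs psi i (lams i)).

End Defs.

From HB Require Import structures.
From mathcomp Require Import all_boot all_order all_algebra.
From mathcomp Require Import all_classical all_reals all_analysis.
Import Order.TTheory GRing.Theory Num.Theory.
Import numFieldNormedType.Exports.
Set Implicit Arguments. Unset Strict Implicit.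
Local Open Scope ring_scope.

(* The constraint enters the KKT conditions only through its values and
   gradients at B_1, ..., B_g, so psi := zeta + h works for any differentiable h
   that is critical at every B_i and satisfies h(B_i) = zeta(B) - zeta(B_i) and
   h(B) = 0.  Such an h is a Lagrange-type interpolant at the distinct nodes
   among B, B_1, ..., B_g, built from the squared distance q(P, X) = |X - P|^2:
   the bump  prod_{Q <> P} (q(P, Q) - q(P, X))^2  is critical at P (because
   q(P, .) is) and at every other node Q (where it vanishes to second order),
   is nonzero at P and vanishes at the other nodes. *)

Section CriticalPoint.
Variables (R : numFieldType) (V : normedModType R).
Implicit Types (f g : V -> R) (x : V).

Definition critical f x := differentiable f x /\ forall v, 'd f x v = 0.

Lemma critical_cst (c : R) x : critical (cst c) x.
Proof. by split=> [|v]; [exact: differentiable_cst | rewrite diff_cst]. Qed.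

Lemma criticalD f g x : critical f x -> critical g x -> critical (f + g) x.
Proof.
move=> [df f0] [dg g0]; split=> [|v]; first exact: differentiableD.
by rewrite diffD //= f0 g0 addr0.
Qed.

Lemma criticalB f g x : critical f x -> critical g x -> critical (f - g) x.
Proof.
move=> [df f0] [dg g0]; split=> [|v]; first exact: differentiableB.
by rewrite diffB //= f0 g0 subr0.
Qed.

Lemma criticalM f g x : critical f x -> critical g x -> critical (f * g) x.
Proof.
move=> [df f0] [dg g0]; split=> [|v]; first exact: differentiableM.
by rewrite diffM // addrfctE /= f0 g0 !scaler0 addr0.
Qed.

Lemma criticalMl_eq0 f g x :
  critical f x -> f x = 0 -> differentiable g x -> critical (f * g) x.
Proof.
move=> [df f0] fx0 dg; split=> [|v]; first exact: differentiableM.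
by rewrite diffM // addrfctE /= f0 fx0 scale0r scaler0 addr0.
Qed.

Lemma critical_sqr f x : differentiable f x -> f x = 0 -> critical (f ^+ 2) x.
Proof.
move=> df fx0; split=> [|v]; first exact: differentiableX.
by rewrite diffX //= expr1 fx0 mulr0 scale0r.
Qed.

Lemma critical_sum (I : Type) (s : seq I) (F : I -> V -> R) x :
  (forall i, critical (F i) x) -> critical (\sum_(i <- s) F i) x.
Proof.
move=> FC; elim/big_ind: _ => //; first exact: critical_cst.
by move=> f g; apply: criticalD.
Qed.

Lemma critical_prod (I : Type) (s : seq I) (P : pred I) (F : I -> V -> R) x :
  (forall i, P i -> critical (F i) x) -> critical (\prod_(i <- s | P i) F i) x.
Proof.
move=> FC; elim/big_ind: _ => //; first exact: critical_cst.
by move=> f g; apply: criticalM.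
Qed.

Lemma differentiable_prod (I : Type) (s : seq I) (P : pred I) (F : I -> V -> R) x :
  (forall i, P i -> differentiable (F i) x) ->
  differentiable (\prod_(i <- s | P i) F i) x.
Proof.
by move=> Fd; elim/big_ind: _ => // f g; apply: differentiableM.
Qed.

End CriticalPoint.

Section CriticalInterpolation.
Variables (R : numFieldType) (V : normedModType R) (q : V -> V -> R).
Hypotheses (q_differentiable : forall P X, differentiable (q P) X)
  (q_critical : forall P, critical (q P) P)
  (q_eq0 : forall P X, (q P X == 0) = (X == P)).

Definition bump (pts : seq V) (P : V) : V -> R :=
  \prod_(Q <- pts | Q != P) (cst (q P Q) - q P) ^+ 2.

Let factor_differentiable P Q X : differentiable (cst (q P Q) - q P) X.
Proof. exact: differentiableB (differentiable_cst _ _) (q_differentiable _ _). Qed.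

Lemma bump_differentiable pts P X : differentiable (bump pts P) X.
Proof.
by apply: differentiable_prod => Q _; apply/differentiableX/factor_differentiable.
Qed.

Lemma bump_critical pts P Q : Q \in pts -> critical (bump pts P) Q.
Proof.
move=> Qpts; have [->|QP] := eqVneq Q P.
  apply: critical_prod => Q' _; rewrite expr2.
  have factor_crit := criticalB (critical_cst (q P Q') P) (q_critical P).
  exact: (criticalM factor_crit factor_crit).
rewrite /bump (big_rem Q) //= QP; apply: criticalMl_eq0.
- by apply: critical_sqr; [exact: factor_differentiable | rewrite !fctE subrr].
- by rewrite !fctE subrr expr0n.
- exact: bump_differentiable.
Qed.

Lemma bump_eq0 pts P Q : Q \in pts -> Q != P -> bump pts P Q = 0.
Proof.
move=> Qpts QP; apply/eqP; rewrite /bump fct_prodE prodf_seq_eq0.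
by apply/hasP; exists Q; rewrite //= QP !fctE subrr expr0n eqxx.
Qed.

Lemma bump_self_neq0 pts P : bump pts P P != 0.
Proof.
rewrite /bump fct_prodE prodf_seq_neq0; apply/allP => Q _; apply/implyP => QP.
have qPP : q P P = 0 by apply/eqP; rewrite q_eq0.
by rewrite !fctE qPP subr0 expf_neq0 // q_eq0.
Qed.

Definition interpolant (pts : seq V) (c : V -> R) : V -> R :=
  \sum_(P <- pts) cst (c P / bump pts P P) * bump pts P.

Lemma interpolant_differentiable pts c X :
  differentiable (interpolant pts c) X.
Proof.
rewrite /interpolant; elim/big_ind: _ => //[f g|P _].
  exact: differentiableD.
exact: differentiableM (differentiable_cst _ _) (bump_differentiable _ _ _).
Qed.

Lemma interpolant_critical pts c Q :
  Q \in pts -> critical (interpolant pts c) Q.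
Proof.
move=> Qpts; apply: critical_sum => P.
by apply: criticalM; [exact: critical_cst | exact: bump_critical].
Qed.

Lemma interpolantE pts c Q : uniq pts -> Q \in pts -> interpolant pts c Q = c Q.
Proof.
move=> pts_uniq Qpts; rewrite /interpolant fct_sumE (big_rem Q) //= big1_seq.
  by rewrite addr0 !fctE divfK ?bump_self_neq0.
move=> P /andP[_]; rewrite mem_rem_uniq // inE => /andP[PQ _].
by rewrite !fctE (bump_eq0 Qpts) ?mulr0 1?eq_sym.
Qed.

Lemma exists_critical_interpolant (s : seq V) (c : V -> R) :
  exists h : V -> R, (forall X, differentiable h X) /\
    forall P, P \in s -> h P = c P /\ critical h P.
Proof.
exists (interpolant (undup s) c); split=> [X|P].
  exact: interpolant_differentiable.
rewrite -mem_undup => Ps; split; last exact: interpolant_critical.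
exact: interpolantE (undup_uniq s) Ps.
Qed.

End CriticalInterpolation.

Section MatrixSquaredDistance.
Variables (R : realFieldType) (m n : nat).

Definition sqdist (P : 'M[R]_(m, n)) : 'M[R]_(m, n) -> R :=
  \sum_(a < m) \sum_(b < n) ((fun X : 'M[R]_(m, n) => X a b) - cst (P a b)) ^+ 2.

Lemma sqdistE P X : sqdist P X = \sum_(a < m) \sum_(b < n) (X a b - P a b) ^+ 2.
Proof.
rewrite /sqdist fct_sumE; apply: eq_bigr => a _.
by rewrite fct_sumE; apply: eq_bigr => b _; rewrite !fctE.
Qed.

Let entry_sub_differentiable P a b X :
  differentiable ((fun X : 'M[R]_(m, n) => X a b) - cst (P a b)) X.
Proof. exact: differentiableB (differentiable_coord _ _ _) (differentiable_cst _ _). Qed.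

Lemma sqdist_differentiable P X : differentiable (sqdist P) X.
Proof.
apply: differentiable_sum => a; apply: differentiable_sum => b.
exact/differentiableX/entry_sub_differentiable.
Qed.

Lemma sqdist_critical P : critical (sqdist P) P.
Proof.
apply: critical_sum => a; apply: critical_sum => b; apply: critical_sqr.
  exact: entry_sub_differentiable.
by rewrite !fctE subrr.
Qed.

Lemma sqdist_eq0 P X : (sqdist P X == 0) = (X == P).
Proof.
apply/eqP/eqP => [|->]; rewrite sqdistE; last first.
  by apply: big1 => a _; apply: big1 => b _; rewrite subrr expr0n.
move=> sum0; apply/matrixP => a b.
have row0 a' : \sum_(b < n) (X a' b - P a' b) ^+ 2 = 0.
  apply: (psumr_eq0P _ sum0) => // a'' _.
  by apply: sumr_ge0 => b' _; exact: sqr_ge0.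
have : (X a b - P a b) ^+ 2 = 0.
  by apply: (psumr_eq0P _ (row0 a)) => // b' _; exact: sqr_ge0.
by move/eqP; rewrite sqrf_eq0 subr_eq0 => /eqP.
Qed.

End MatrixSquaredDistance.

Lemma is_gradD_critical (R : realType) m n (f h : 'M[R]_(m, n) -> R) X Gr :
  is_grad f X Gr -> critical h X -> is_grad (f + h) X Gr.
Proof.
move=> [df dfE] [dh dh0]; split=> [|V]; first exact: differentiableD.
by rewrite diffD //= dh0 addr0 dfE.
Qed.

Theorem proposition1 (R : realType) (g L : nat)
  (Gs : 'I_g -> 'M[R]_L) (S : 'M[R]_(\sum_(i < g) L)%N) (B : 'M[R]_L)
  (zeta : 'M[R]_L -> R) (Bk1 : 'I_g -> 'M[R]_L) (lamk : 'I_g -> R) :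
  (forall i, is_diag_mx (Gs i) /\ pd_mx (Gs i)) ->
  psd_mx S ->
  (forall X, differentiable zeta X) ->
  (forall i, pd_mx (Bk1 i)) ->
  (forall i, block_stationary S Gs Bk1 zeta i (lamk i)) ->
  exists psi : 'M[R]_L -> R,
    (forall X, differentiable psi X) /\ KKT_pair S Gs psi B Bk1 lamk.
Proof.
move=> _ _ zeta_diff _ stationary.
have [h [h_diff h_interp]] :=
  exists_critical_interpolant (@sqdist_differentiable R L L)
    (@sqdist_critical R L L) (@sqdist_eq0 R L L)
    (B :: codom Bk1) (fun P => zeta B - zeta P).
exists (zeta + h); split=> [X|]; first exact: differentiableD.
have [hB _] := h_interp B (mem_head _ _).
have h_Bk i : h (Bk1 i) = zeta B - zeta (Bk1 i) /\ critical h (Bk1 i).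
  by apply: h_interp; rewrite inE codom_f orbT.
split=> i.
  by rewrite !fctE (h_Bk i).1 hB subrr addr0 addrC subrK.
have [GQ [Gc [gradQ grad_zeta stat]]] := stationary i.
by exists GQ, Gc; split=> //; apply: is_gradD_critical (h_Bk i).2.
Qed.
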